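(* Let $(m_j)_{j=1}^{\infty}$ be a strictly increasing sequence of positive integers with $m_{j+1}\ge q\,m_j$ for all $j$, where $q\ge 2$. Let $A_j>0$, $B_j\in\mathbb{C}$ with $A_j^2-|B_j|^2=1$, and let $M,N\in\mathbb{N}_0$ with $M<N$. Expand each entry of the matrix product $$\prod_{j=M+1}^{N}\begin{bmatrix} A_j & B_j e^{2\pi i m_j t}\\ \overline{B_j}e^{-2\pi i m_j t} & A_j\end{bmatrix}$$ (factors in increasing order of $j$ from left to right) formally as a sum of products, one factor taken from each matrix, so that each term is a constant times $e^{2\pi i n t}$ for some integer frequency $n$. Then, within each entry, the frequencies of distinct terms of this expansion are mutually separated by at least $m_{M+1}$; i.e. any two distinct terms have frequencies $n\ne n'$ with $|n-n'|\ge m_{M+1}$.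
   Context: The frequency of a term is the integer $n$ for which the term is a constant multiple of $e^{2\pi i n t}$; e.g. $B_{M+1}e^{2\pi i m_{M+1}t}\cdot A_{M+2}$ has frequency $m_{M+1}$. *)

From Stdlib Require Import Reals ZArith List.
From Coquelicot Require Import Coquelicot.
Open Scope R_scope.

(* Row/column indices of a 2x2 matrix are encoded by bool:
   false = first row/column, true = second row/column.
   An "entry choice" e = (r, c) picks entry (r, c) of a factor. *)

(* Matrix j of the product:
   [ A_j                      B_j e^{2 pi i m_j t} ]
   [ conj(B_j) e^{-2pi i m_j t}          A_j       ]
   Each entry is (coefficient) * e^{2 pi i (frequency) t}. *)
Definition entry_coef (A : nat -> R) (B : nat -> C) (j : nat) (e : bool * bool) : C :=
  match e with
  | (false, false) => RtoC (A j)
  | (false, true) => B j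
  | (true, false) => Cconj (B j)
  | (true, true) => RtoC (A j)
  end.

Definition entry_freq (m : nat -> nat) (j : nat) (e : bool * bool) : Z :=
  match e with
  | (false, true) => Z.of_nat (m j)
  | (true, false) => (- Z.of_nat (m j))%Z
  | _ => 0%Z
  end.

Definition cexp_freq (n : Z) (t : R) : C :=
  (cos (2 * PI * IZR n * t), sin (2 * PI * IZR n * t)).

Definition entry_val (A : nat -> R) (B : nat -> C) (m : nat -> nat) (j : nat)
  (e : bool * bool) (t : R) : C :=
  Cmult (entry_coef A B j e) (cexp_freq (entry_freq m j e) t).

(* A term of the formal expansion of entry (a, b) of the product of the
   factors j, j+1, ..., j + length l - 1 (left to right) is a list l of entry
   choices, one per factor, chained: the first row is a, the column of each
   choice is the row of the next, the last column is b. *)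
Fixpoint is_term (a b : bool) (l : list (bool * bool)) : Prop :=
  match l with
  | nil => a = b
  | (r, c) :: l' => r = a /\ is_term c b l'
  end.

Fixpoint term_freq (m : nat -> nat) (j : nat) (l : list (bool * bool)) : Z :=
  match l with
  | nil => 0%Z
  | e :: l' => (entry_freq m j e + term_freq m (S j) l')%Z
  end.

Fixpoint term_coef (A : nat -> R) (B : nat -> C) (j : nat) (l : list (bool * bool)) : C :=
  match l with
  | nil => RtoC 1
  | e :: l' => Cmult (entry_coef A B j e) (term_coef A B (S j) l')
  end.

Fixpoint term_val (A : nat -> R) (B : nat -> C) (m : nat -> nat) (j : nat)
  (l : list (bool * bool)) (t : R) : C :=
  match l with
  | nil => RtoC 1
  | e :: l' => Cmult (entry_val A B m j e t) (term_val A B m (S j) l' t)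
  end.

(* Entry (r, c) of the j-th factor has frequency (c - r) m_j, reading rows and
   columns as 0/1.  Along a term starting in row a, the quantity
   a m_j + (frequency) therefore telescopes into a function of the chosen
   columns alone, each column c of factor k contributing -c (m_(k+1) - m_k).
   As m_(k+1) - m_k >= m_k exceeds the sum of all earlier increments
   m_k - m_(M+1), two different column sequences give values at least m_(M+1)
   apart; and a term is determined by its columns. *)
From Stdlib Require Import Reals ZArith List Lia Lra.
From Coquelicot Require Import Coquelicot.
Open Scope R_scope.

Lemma entry_freq_b2z (m : nat -> nat) (j : nat) (r c : bool) :
  entry_freq m j (r, c) = ((Z.b2z c - Z.b2z r) * Z.of_nat (m j))%Z.
Proof. destruct r, c; cbn [entry_freq Z.b2z]; lia. Qed.

Definition anchored_freq (m : nat -> nat) (j : nat) (a : bool)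
  (l : list (bool * bool)) : Z :=
  (term_freq m j l + Z.b2z a * Z.of_nat (m j))%Z.

Lemma anchored_freq_cons (m : nat -> nat) (j : nat) (a c : bool)
  (l : list (bool * bool)) :
  anchored_freq m j a ((a, c) :: l) =
  (anchored_freq m (S j) c l - Z.b2z c * (Z.of_nat (m (S j)) - Z.of_nat (m j)))%Z.
Proof. unfold anchored_freq; cbn [term_freq]; rewrite entry_freq_b2z; ring. Qed.

Lemma is_term_map_snd_inj (l1 l2 : list (bool * bool)) (a b : bool) :
  is_term a b l1 -> is_term a b l2 -> map snd l1 = map snd l2 -> l1 = l2.
Proof.
  revert l2 a.
  induction l1 as [|[r c] t1 IH]; intros [|[r' c'] t2] a T1 T2 Hcols;
    simpl in *; try discriminate; auto.
  destruct T1 as [-> T1], T2 as [-> T2].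
  injection Hcols as -> Hcols.
  f_equal; eapply IH; eauto.
Qed.

Section Lacunary.

Variable m : nat -> nat.
Hypothesis m_double : forall j, (1 <= j)%nat -> (2 * m j <= m (S j))%nat.

Lemma anchored_freq_separated (l1 l2 : list (bool * bool)) (j : nat) (a a' b : bool) :
  (1 <= j)%nat -> length l1 = length l2 ->
  is_term a b l1 -> is_term a' b l2 ->
  (map snd l1 = map snd l2 /\ anchored_freq m j a l1 = anchored_freq m j a' l2)
  \/ (Z.of_nat (m j) <= Z.abs (anchored_freq m j a l1 - anchored_freq m j a' l2))%Z.
Proof.
  revert l2 j a a'.
  induction l1 as [|[r c] t1 IH]; intros [|[r' c'] t2] j a a' Hj Hlen T1 T2;
    simpl in Hlen; try discriminate.
  - simpl in T1, T2; subst; left; auto.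
  - simpl in T1, T2; destruct T1 as [-> T1], T2 as [-> T2].
    rewrite !anchored_freq_cons.
    assert (Hgap := m_double j Hj).
    destruct (IH t2 (S j) c c' ltac:(lia) ltac:(lia) T1 T2) as [[Hcols Heq]|Hsep].
    + destruct (Bool.bool_dec c c') as [<-|Hcc'].
      * left; simpl; rewrite Hcols, Heq; auto.
      * right; rewrite Heq; destruct c, c'; cbn [Z.b2z]; try congruence; lia.
    + right; destruct c, c'; cbn [Z.b2z]; lia.
Qed.

End Lacunary.

Lemma nat_double_le_of_ratio (q : R) (x y : nat) :
  2 <= q -> q * INR x <= INR y -> (2 * x <= y)%nat.
Proof.
  intros Hq Hxy; apply INR_le; rewrite mult_INR; simpl (INR 2).
  pose proof (pos_INR x); nra.
Qed.

Theorem lemma2p1 (m : nat -> nat) (q : R) (A : nat -> R) (B : nat -> C)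
  (M N : nat) (a b : bool) (l1 l2 : list (bool * bool)) :
  2 <= q ->
  (forall j, (1 <= j)%nat -> (0 < m j)%nat) ->
  (forall j, (1 <= j)%nat -> (m j < m (S j))%nat) ->
  (forall j, (1 <= j)%nat -> q * INR (m j) <= INR (m (S j))) ->
  (forall j, (1 <= j)%nat -> 0 < A j) ->
  (forall j, (1 <= j)%nat -> A j ^ 2 - Cmod (B j) ^ 2 = 1) ->
  (M < N)%nat ->
  length l1 = (N - M)%nat -> length l2 = (N - M)%nat ->
  is_term a b l1 -> is_term a b l2 -> l1 <> l2 ->
  term_freq m (S M) l1 <> term_freq m (S M) l2 /\
  (Z.of_nat (m (S M)) <= Z.abs (term_freq m (S M) l1 - term_freq m (S M) l2))%Z.
Proof.
  intros Hq Hpos _ Hratio _ _ _ L1 L2 T1 T2 Hne.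
  assert (Hdouble : forall j, (1 <= j)%nat -> (2 * m j <= m (S j))%nat)
    by (intros j Hj; exact (nat_double_le_of_ratio q _ _ Hq (Hratio j Hj))).
  destruct (anchored_freq_separated m Hdouble l1 l2 (S M) a a b
              ltac:(lia) ltac:(lia) T1 T2) as [[Hcols _]|Hsep].
  - exfalso; exact (Hne (is_term_map_snd_inj l1 l2 a b T1 T2 Hcols)).
  - unfold anchored_freq in Hsep.
    specialize (Hpos (S M) ltac:(lia)).
    split; lia.
Qed.
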